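(* Let $p,q\ge2$ with $q-1=d(p-1)$ for a positive integer $d$. The embedding $j_1:F(p)\to F(q)$ determined by $x_i\mapsto x_{di}$ ($i\ge0$) is a quasi-isometric embedding with respect to the word metrics of $F(p)$ and $F(q)$.
   Context: For $r\ge2$, $F(r)$ is the group of piecewise-linear orientation-preserving homeomorphisms of $[0,1]$ with breakpoints in $\mathbb{Z}[1/r]$ and slopes integer powers of $r$, with presentation $\langle x_0,x_1,\dots\mid x_i^{-1}x_jx_i=x_{j+r-1}\ (i<j)\rangle$; it is generated by $x_0,\dots,x_{r-1}$ and its word metric is taken with respect to these generators. The assignment $x_i\mapsto x_{di}$ from the generators of $F(p)$ to $F(q)$ respects the relations and defines an injective homomorphism $j_1$. A map $f$ between metric spaces is a quasi-isometric embedding if there are constants $C\ge1$, $K\ge0$ with $\frac1C d(a,b)-K\le d(f(a),f(b))\le C d(a,b)+K$ for all $a,b$. *)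

From Stdlib Require Import Reals List Arith ClassicalEpsilon.
Import ListNotations.

(* A letter (i, false) is x_i, (i, true) is x_i^{-1}. *)
Definition letter := (nat * bool)%type.
Definition word := list letter.

Definition linv (l : letter) : letter := (fst l, negb (snd l)).
Definition winv (w : word) : word := rev (map linv w).

Inductive Feq (r : nat) : word -> word -> Prop :=
| Feq_refl w : Feq r w w
| Feq_sym u v : Feq r u v -> Feq r v u
| Feq_trans u v w : Feq r u v -> Feq r v w -> Feq r u w
| Feq_cancel u v x : Feq r (u ++ [x; linv x] ++ v) (u ++ v)
| Feq_rel u v i j : i < j ->
    Feq r (u ++ [(i, true); (j, false); (i, false)] ++ v)
          (u ++ [(j + r - 1, false)] ++ v).

Definition gen_word (r : nat) (u : word) : Prop :=
  forall l, In l u -> fst l < r.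

Definition is_wordlen (r : nat) (g : word) (n : nat) : Prop :=
  (exists u, gen_word r u /\ Feq r u g /\ length u = n) /\
  (forall u, gen_word r u -> Feq r u g -> n <= length u).

Definition wordlen (r : nat) (g : word) : nat :=
  epsilon (inhabits 0%nat) (is_wordlen r g).

Definition Fdist (r : nat) (a b : word) : nat := wordlen r (winv a ++ b).

Definition j1 (d : nat) (w : word) : word :=
  map (fun l => (d * fst l, snd l)) w.

(* The upper bound is immediate: j1 sends generators to generators.  For the lower
   bound, let F(r) act on the ends of the forest of r-ary trees.  The action is
   faithful, and multiplying roots and digits by d embeds the p-forest into the
   q-forest compatibly with j1; this is where q - 1 = d (p - 1) is used.  A geodesic
   word for j1(g) is equivalent to P' N'^-1 with positive words P', N' whose size
   [tau] is linear in its length.  Following which roots of the q-forest carry the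
   dilated p-forest pulls P' and N' back to positive F(p)-words P and N of no larger
   size, such that g and P N^-1 act alike and hence are equal.  A positive word of
   size tau has length at most 3 tau in the generators, so that
   |g|_p <= 12 q |j1 g|_q. *)

From Stdlib Require Import Reals List Arith Lia Lra Sorted Wf_nat Bool
  FunctionalExtensionality Classical ClassicalEpsilon Setoid Morphisms.
Import ListNotations.

(** * Words and the presentation *)

Lemma linv_involutive l : linv (linv l) = l.
Proof. destruct l as [a []]; reflexivity. Qed.

Lemma winv_app u v : winv (u ++ v) = winv v ++ winv u.
Proof. unfold winv. rewrite map_app, rev_app_distr. reflexivity. Qed.

Lemma winv_involutive u : winv (winv u) = u.
Proof.
  unfold winv. rewrite map_rev, rev_involutive, map_map.
  rewrite <- (map_id u) at 2. apply map_ext, linv_involutive.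
Qed.

Lemma length_winv u : length (winv u) = length u.
Proof. unfold winv. rewrite length_rev, length_map. reflexivity. Qed.

Instance Feq_Equivalence r : Equivalence (Feq r).
Proof. split; [exact (Feq_refl r) | exact (Feq_sym r) | exact (Feq_trans r)]. Qed.

Lemma Feq_congr r u v a b : Feq r u v -> Feq r (a ++ u ++ b) (a ++ v ++ b).
Proof.
  induction 1 as [| | |u v x|u v i j Hij].
  - reflexivity.
  - symmetry; assumption.
  - etransitivity; eassumption.
  - pose proof (Feq_cancel r (a ++ u) (v ++ b) x) as E.
    rewrite <- !app_assoc in *. exact E.
  - pose proof (Feq_rel r (a ++ u) (v ++ b) i j Hij) as E.
    rewrite <- !app_assoc in *. exact E.
Qed.

Instance app_Feq_Proper r : Proper (Feq r ==> Feq r ==> Feq r) (@app letter).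
Proof.
  intros u u' Hu v v' Hv. transitivity (u' ++ v).
  - exact (Feq_congr r u u' [] v Hu).
  - pose proof (Feq_congr r v v' u' [] Hv) as E. rewrite !app_nil_r in E. exact E.
Qed.

Instance cons_Feq_Proper r : Proper (eq ==> Feq r ==> Feq r) (@cons letter).
Proof. intros l _ <- u v H. apply (app_Feq_Proper r [l] [l]); [reflexivity | exact H]. Qed.

Lemma Feq_cancel_pair r x : Feq r [x; linv x] [].
Proof. exact (Feq_cancel r [] [] x). Qed.

Lemma Feq_relation r i j : i < j ->
  Feq r [(i, true); (j, false); (i, false)] [(j + r - 1, false)].
Proof. exact (Feq_rel r [] [] i j). Qed.

Lemma Feq_winv_r r u : Feq r (u ++ winv u) [].
Proof.
  induction u as [|l u IH]; [reflexivity|].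
  change (l :: u) with ([l] ++ u). rewrite winv_app, <- app_assoc, (app_assoc u), IH.
  apply Feq_cancel_pair.
Qed.

Lemma Feq_winv_l r u : Feq r (winv u ++ u) [].
Proof. rewrite <- (winv_involutive u) at 2. apply Feq_winv_r. Qed.

Instance winv_Feq_Proper r : Proper (Feq r ==> Feq r) winv.
Proof.
  intros u v H. transitivity ((winv u ++ u) ++ winv v).
  - rewrite <- app_assoc, <- (app_nil_r (winv u)) at 1.
    apply app_Feq_Proper; [reflexivity|]. rewrite H, Feq_winv_r. reflexivity.
  - rewrite Feq_winv_l. reflexivity.
Qed.

Lemma Feq_swap r a i : a < i ->
  Feq r [(i, false); (a, false)] [(a, false); (i + r - 1, false)].
Proof.
  intro Hai. transitivity ([(a, false)] ++ [(a, true); (i, false); (a, false)]).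
  - symmetry. exact (Feq_cancel r [] [(i, false); (a, false)] (a, false)).
  - rewrite Feq_relation by exact Hai. reflexivity.
Qed.

Lemma Feq_swap_inv_lt r k a : k < a ->
  Feq r [(k, true); (a, false)] [(a + r - 1, false); (k, true)].
Proof.
  intro Hka. transitivity ([(k, true); (a, false); (k, false)] ++ [(k, true)]).
  - symmetry. rewrite <- (app_nil_r [(k, true); (a, false)]).
    exact (Feq_cancel r [(k, true); (a, false)] [] (k, false)).
  - rewrite Feq_relation by exact Hka. reflexivity.
Qed.

Lemma Feq_swap_inv_gt r k a : a < k ->
  Feq r [(k, true); (a, false)] [(a, false); (k + r - 1, true)].
Proof.
  intro Hak. pose proof (winv_Feq_Proper r _ _ (Feq_swap r a k Hak)) as E. cbn in E.
  transitivity ([(a, false)] ++ [(a, true); (k, true)] ++ [(a, false)]).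
  { symmetry. exact (Feq_cancel r [] [(k, true); (a, false)] (a, false)). }
  rewrite E. cbn. rewrite <- (app_nil_r [(a, false); (k + r - 1, true)]).
  exact (Feq_cancel r [(a, false); (k + r - 1, true)] [] (a, true)).
Qed.

Lemma gen_word_cons r l w : gen_word r (l :: w) -> fst l < r /\ gen_word r w.
Proof. intro H. split; [apply H; left | intros l' Hl'; apply H; right]; easy. Qed.

Lemma gen_word_app r u v : gen_word r u -> gen_word r v -> gen_word r (u ++ v).
Proof. intros Hu Hv l [Hl|Hl]%in_app_or; [apply Hu | apply Hv]; exact Hl. Qed.

Lemma gen_word_winv r u : gen_word r u -> gen_word r (winv u).
Proof.
  intros Hu l Hl. unfold winv in Hl. apply in_rev, in_map_iff in Hl as [l' [<- Hl']].
  exact (Hu l' Hl').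
Qed.

(** * The action on the forest *)

Definition stream := nat -> nat.
Definition point := (nat * stream)%type.

Definition scons (c : nat) (s : stream) : stream :=
  fun n => match n with 0 => c | S n' => s n' end.
Definition stl (s : stream) : stream := fun n => s (S n).

Lemma scons_stl s : scons (s 0) (stl s) = s.
Proof. apply functional_extensionality. intros [|n]; reflexivity. Qed.

(* F(r) acts on the ends of the forest of r-ary trees with roots 0, 1, 2, ...:
   (m, s) is the end of the ray leaving root m along the digits s.  The
   generator x_a turns the roots a, ..., a + r - 1 into the children of a new
   root a and renumbers the later roots. *)
Definition act_gen (r a : nat) (x : point) : point :=
  let (m, s) := x in
  if m <? a then (m, s)
  else if m <? a + r then (a, scons (m - a) s)
  else (m - (r - 1), s).

Definition act_gen_inv (r a : nat) (x : point) : point :=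
  let (m, s) := x in
  if m <? a then (m, s)
  else if m =? a then (a + s 0, stl s)
  else (m + (r - 1), s).

Definition act_letter (r : nat) (l : letter) : point -> point :=
  if snd l then act_gen_inv r (fst l) else act_gen r (fst l).

Fixpoint act (r : nat) (w : word) (x : point) : point :=
  match w with [] => x | l :: w' => act_letter r l (act r w' x) end.

Definition valid (r : nat) (x : point) : Prop := forall n, snd x n < r.

Ltac case_nat :=
  repeat match goal with
  | |- context [?a <? ?b] => destruct (Nat.ltb_spec a b)
  | |- context [?a =? ?b] => destruct (Nat.eqb_spec a b)
  end.

Lemma act_gen_lt r a m s : m < a -> act_gen r a (m, s) = (m, s).
Proof. intro H. unfold act_gen. case_nat; first [reflexivity | lia]. Qed.

Lemma act_gen_mid r a m s : a <= m < a + r -> act_gen r a (m, s) = (a, scons (m - a) s).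
Proof. intro H. unfold act_gen. case_nat; first [reflexivity | lia]. Qed.

Lemma act_gen_ge r a m s : a + r <= m -> act_gen r a (m, s) = (m - (r - 1), s).
Proof. intro H. unfold act_gen. case_nat; first [reflexivity | lia]. Qed.

Lemma fst_act_gen_le r a x : fst (act_gen r a x) <= fst x.
Proof. destruct x as [m s]. unfold act_gen. case_nat; cbn; lia. Qed.

Lemma act_app r u v x : act r (u ++ v) x = act r u (act r v x).
Proof. induction u as [|l u IH]; cbn; [|rewrite IH]; reflexivity. Qed.

Lemma act_gen_act_gen_inv r a x : valid r x -> act_gen r a (act_gen_inv r a x) = x.
Proof.
  destruct x as [m s]. intro Hx. specialize (Hx 0). cbn in Hx.
  unfold act_gen_inv, act_gen. case_nat; try lia.
  - reflexivity.
  - subst. replace (a + s 0 - a) with (s 0) by lia. rewrite scons_stl. reflexivity.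
  - f_equal. lia.
Qed.

Lemma act_letter_valid r l x : valid r x -> valid r (act_letter r l x).
Proof.
  destruct x as [m s]. unfold valid, act_letter, act_gen, act_gen_inv.
  intros Hx n. destruct (snd l); case_nat; cbn in *; try apply Hx.
  destruct n; cbn; [lia | apply Hx].
Qed.

Lemma act_valid r w x : valid r x -> valid r (act r w x).
Proof. induction w; cbn; auto using act_letter_valid. Qed.

Section ForestAction.

Variable r : nat.
Hypothesis r_pos : 1 <= r.

Lemma act_gen_inv_act_gen a x : act_gen_inv r a (act_gen r a x) = x.
Proof.
  destruct x as [m s]. unfold act_gen, act_gen_inv.
  case_nat; try lia; cbn; f_equal; first [reflexivity | lia].
Qed.

Lemma act_letter_linv l x : valid r x -> act_letter r (linv l) (act_letter r l x) = x.
Proof.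
  destruct l as [a []]; cbn; intro Hx.
  - apply act_gen_act_gen_inv, Hx.
  - apply act_gen_inv_act_gen.
Qed.

Lemma act_gen_comm i j x : i < j ->
  act_gen r j (act_gen r i x) = act_gen r i (act_gen r (j + r - 1) x).
Proof.
  intro Hij. destruct x as [m s].
  destruct (Nat.ltb_spec m i); [|destruct (Nat.ltb_spec m (i + r))].
  - rewrite !act_gen_lt by lia. reflexivity.
  - rewrite act_gen_mid, act_gen_lt, act_gen_lt, act_gen_mid by lia. reflexivity.
  - rewrite (act_gen_ge r i) by lia.
    destruct (Nat.ltb_spec m (j + r - 1)); [|destruct (Nat.ltb_spec m (j + r - 1 + r))].
    + rewrite !act_gen_lt, act_gen_ge by lia. reflexivity.
    + rewrite !act_gen_mid, act_gen_ge by lia. f_equal; [lia|]. f_equal. lia.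
    + now rewrite !act_gen_ge by lia.
Qed.

Lemma act_Feq u v x : Feq r u v -> valid r x -> act r u x = act r v x.
Proof.
  intro H. revert x.
  induction H as [|u v _ IH|u v w _ IH1 _ IH2|u v l|u v i j Hij]; intros x Hx.
  - reflexivity.
  - symmetry. apply IH, Hx.
  - rewrite IH1, IH2 by exact Hx. reflexivity.
  - rewrite !act_app. cbn [act]. rewrite <- (linv_involutive l) at 1.
    rewrite act_letter_linv; [reflexivity|]. apply act_valid, Hx.
  - rewrite !act_app. cbn [act act_letter fst snd]. f_equal.
    rewrite act_gen_comm by exact Hij. apply act_gen_inv_act_gen.
Qed.

Lemma act_winv_l w x : valid r x -> act r (winv w) (act r w x) = x.
Proof.
  revert x. induction w as [|l w IH]; intros x Hx; [reflexivity|].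
  change (l :: w) with ([l] ++ w). rewrite winv_app, !act_app.
  change (winv [l]) with [linv l]. cbn [act].
  rewrite act_letter_linv by (apply act_valid, Hx). apply IH, Hx.
Qed.

Lemma act_winv_r w x : valid r x -> act r w (act r (winv w) x) = x.
Proof. rewrite <- (winv_involutive w) at 1. apply act_winv_l. Qed.

End ForestAction.

(** * Normal forms *)

Definition pos_word (L : list nat) : word := map (fun a => (a, false)) L.

Lemma pos_word_app L M : pos_word (L ++ M) = pos_word L ++ pos_word M.
Proof. apply map_app. Qed.

(* [tau r L] controls the length of [pos_word L] in the generators x_0, ..., x_(r-1)
   ([pos_word_gen_word]): sorting the word raises the index of a letter by r - 1 for
   each letter after it. *)
Fixpoint tau (r : nat) (L : list nat) : nat :=
  match L with
  | [] => 0
  | a :: L' => Nat.max (a + r + (r - 1) * length L') (tau r L')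
  end.

Lemma tau_ge_length r L : (r - 1) * length L <= tau r L.
Proof. induction L; cbn; nia. Qed.

Lemma tau_ge_list_max r L : list_max L <= tau r L.
Proof.
  induction L as [|a L IH]; [cbn; lia|].
  change (list_max (a :: L)) with (Nat.max a (list_max L)). cbn [tau]. lia.
Qed.

Lemma tau_snoc r L b : tau r (L ++ [b]) = Nat.max (tau r L + (r - 1)) (b + r).
Proof. induction L as [|a L IH]; cbn; [lia|]. rewrite IH, length_app. cbn. nia. Qed.

(* Moves x_k^-1 to the right through [pos_word P]; it either cancels or comes out
   on the right as the returned inverse letter. *)
Fixpoint push_inv (r k : nat) (P : list nat) : list nat * option nat :=
  match P with
  | [] => ([], Some k)
  | a :: P' =>
      if a =? k then (P', None)
      else if k <? a then let (P1, o) := push_inv r k P' in ((a + r - 1) :: P1, o)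
      else let (P1, o) := push_inv r (k + r - 1) P' in (a :: P1, o)
  end.

Definition opt_inv (o : option nat) : word :=
  match o with None => [] | Some k => [(k, true)] end.

Lemma push_inv_Feq r k P :
  Feq r ((k, true) :: pos_word P)
    (pos_word (fst (push_inv r k P)) ++ opt_inv (snd (push_inv r k P))).
Proof.
  revert k. induction P as [|a P IH]; intro k; [reflexivity|].
  change ((k, true) :: pos_word (a :: P)) with ([(k, true); (a, false)] ++ pos_word P).
  cbn [push_inv]. destruct (Nat.eqb_spec a k) as [->|]; [|destruct (Nat.ltb_spec k a)].
  - cbn [fst snd opt_inv]. rewrite app_nil_r. exact (Feq_cancel r [] (pos_word P) (k, true)).
  - specialize (IH k). destruct (push_inv r k P) as [P1 o].
    rewrite Feq_swap_inv_lt by assumption. cbn in *. rewrite IH. reflexivity.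
  - specialize (IH (k + r - 1)). destruct (push_inv r (k + r - 1) P) as [P1 o].
    rewrite Feq_swap_inv_gt by lia. cbn in *. rewrite IH. reflexivity.
Qed.

Lemma push_inv_bounds r k P : 1 <= r ->
  length (fst (push_inv r k P)) <= length P /\
  tau r (fst (push_inv r k P)) <= tau r P + (r - 1) /\
  (forall k', snd (push_inv r k P) = Some k' -> k' <= k + (r - 1) * length P).
Proof.
  intro Hr. revert k. induction P as [|a P IH]; intro k; cbn [push_inv].
  - cbn. split; [lia | split; [lia|]]. intros k' [= <-]. lia.
  - destruct (Nat.eqb_spec a k); [|destruct (Nat.ltb_spec k a)].
    + cbn. split; [lia | split; [lia | discriminate]].
    + destruct (IH k) as [IH1 [IH2 IH3]]. destruct (push_inv r k P) as [P1 o]. cbn in *.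
      split; [|split; [|intros k' Hk'; specialize (IH3 k' Hk')]]; nia.
    + destruct (IH (k + r - 1)) as [IH1 [IH2 IH3]].
      destruct (push_inv r (k + r - 1) P) as [P1 o]. cbn in *.
      split; [|split; [|intros k' Hk'; specialize (IH3 k' Hk')]]; nia.
Qed.

Lemma Feq_normal_form r w : 1 <= r -> exists P N,
  Feq r w (pos_word P ++ winv (pos_word N)) /\
  (gen_word r w -> tau r P <= 2 * r * length w /\ tau r N <= 2 * r * length w).
Proof.
  intro Hr. induction w as [|[k []] w IH].
  - exists [], []. split; [reflexivity | cbn; lia].
  - destruct IH as [P [N [HF HB]]].
    pose proof (push_inv_Feq r k P) as HP. pose proof (push_inv_bounds r k P Hr) as [_ [B1 B2]].
    destruct (push_inv r k P) as [P1 [k'|]]; cbn [fst snd opt_inv] in HP, B1, B2.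
    + exists P1, (N ++ [k']). split.
      * rewrite pos_word_app, winv_app, HF, app_comm_cons, HP, <- app_assoc. reflexivity.
      * intros [Hk Hw]%gen_word_cons. destruct (HB Hw) as [HB1 HB2].
        cbn [fst] in Hk. specialize (B2 k' eq_refl).
        rewrite tau_snoc. pose proof (tau_ge_length r P). cbn [length]. nia.
    + exists P1, N. split.
      * rewrite HF, app_comm_cons, HP, app_nil_r. reflexivity.
      * intros [_ Hw]%gen_word_cons. destruct (HB Hw) as [HB1 HB2]. cbn [length]. nia.
  - destruct IH as [P [N [HF HB]]]. exists (k :: P), N. split.
    + rewrite HF. reflexivity.
    + intros [Hk Hw]%gen_word_cons. destruct (HB Hw) as [HB1 HB2]. cbn in *.
      pose proof (tau_ge_length r P). nia.
Qed.

(** * Faithfulness *)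

(* Insertion sort for positive words: x_i moves past a smaller letter x_a by the
   relation x_i x_a = x_a x_(i+r-1). *)
Fixpoint shift_insert (r i : nat) (L : list nat) : list nat :=
  match L with
  | [] => [i]
  | a :: L' => if i <=? a then i :: L else a :: shift_insert r (i + r - 1) L'
  end.

Fixpoint shift_sort (r : nat) (L : list nat) : list nat :=
  match L with [] => [] | a :: L' => shift_insert r a (shift_sort r L') end.

Lemma length_shift_insert r i L : length (shift_insert r i L) = S (length L).
Proof.
  revert i. induction L as [|a L IH]; intro i; cbn [shift_insert]; [reflexivity|].
  destruct (i <=? a); cbn; [|rewrite IH]; reflexivity.
Qed.

Lemma length_shift_sort r L : length (shift_sort r L) = length L.
Proof. induction L; cbn; [|rewrite length_shift_insert]; auto. Qed.

Lemma Feq_shift_insert r i L : Feq r (pos_word (i :: L)) (pos_word (shift_insert r i L)).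
Proof.
  revert i. induction L as [|a L IH]; intro i; [reflexivity|].
  cbn [shift_insert]. destruct (Nat.leb_spec i a); [reflexivity|].
  change (pos_word (i :: a :: L)) with ([(i, false); (a, false)] ++ pos_word L).
  rewrite Feq_swap by lia. cbn. rewrite (IH (i + r - 1)). reflexivity.
Qed.

Lemma Feq_shift_sort r L : Feq r (pos_word L) (pos_word (shift_sort r L)).
Proof.
  induction L as [|a L IH]; [reflexivity|]. cbn [shift_sort].
  rewrite <- Feq_shift_insert. cbn. rewrite IH. reflexivity.
Qed.

Lemma tau_shift_insert r i L : 1 <= r -> tau r (shift_insert r i L) = tau r (i :: L).
Proof.
  intro Hr. revert i. induction L as [|a L IH]; intro i; [reflexivity|].
  cbn [shift_insert]. destruct (Nat.leb_spec i a); [reflexivity|].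
  cbn [tau]. rewrite IH, length_shift_insert. cbn [tau length]. nia.
Qed.

Lemma tau_shift_sort r L : 1 <= r -> tau r (shift_sort r L) = tau r L.
Proof.
  intro Hr. induction L as [|a L IH]; [reflexivity|]. cbn [shift_sort].
  rewrite tau_shift_insert by exact Hr. cbn [tau]. rewrite IH, length_shift_sort. reflexivity.
Qed.

Lemma in_shift_insert r i L b : 1 <= r -> In b (shift_insert r i L) -> i <= b \/ In b L.
Proof.
  intro Hr. revert i. induction L as [|a L IH]; intro i; cbn [shift_insert].
  - intros [<-|[]]. left; lia.
  - destruct (Nat.leb_spec i a).
    + intros [<-|Hb]; [left; lia | right; exact Hb].
    + intros [<-|Hb]; [right; left; reflexivity|].
      destruct (IH _ Hb); [left; lia | right; right; assumption].
Qed.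

Lemma shift_insert_sorted r i L : 1 <= r ->
  StronglySorted le L -> StronglySorted le (shift_insert r i L).
Proof.
  intro Hr. revert i. induction L as [|a L IH]; intros i HL; cbn [shift_insert].
  - repeat constructor.
  - apply StronglySorted_inv in HL as [HL Ha]. rewrite Forall_forall in Ha.
    destruct (Nat.leb_spec i a); constructor.
    + constructor; [exact HL | rewrite Forall_forall; exact Ha].
    + constructor; [lia|]. rewrite Forall_forall. intros b Hb. specialize (Ha b Hb). lia.
    + apply IH, HL.
    + rewrite Forall_forall. intros b Hb.
      destruct (in_shift_insert r _ _ _ Hr Hb); [lia | apply Ha; assumption].
Qed.

Lemma shift_sort_sorted r L : 1 <= r -> StronglySorted le (shift_sort r L).
Proof.
  intro Hr. induction L; cbn [shift_sort]; [constructor | apply shift_insert_sorted; assumption].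
Qed.

Definition ones : stream := fun _ => 1.

Lemma act_pos_word_cons r a L x :
  act r (pos_word (a :: L)) x = act_gen r a (act r (pos_word L) x).
Proof. reflexivity. Qed.

Lemma act_pos_fixed r L m s : (forall b, In b L -> m < b) -> act r (pos_word L) (m, s) = (m, s).
Proof.
  induction L as [|a L IH]; intro H; [reflexivity|].
  rewrite act_pos_word_cons, IH by (intros b Hb; apply H; right; exact Hb).
  apply act_gen_lt, H. left. reflexivity.
Qed.

Lemma act_pos_fst r a L s : 1 <= r -> (forall b, In b L -> a <= b) ->
  fst (act r (pos_word L) (a, s)) = a.
Proof.
  intros Hr. induction L as [|b L IH]; intro HL; [reflexivity|]. rewrite act_pos_word_cons.
  destruct (act r (pos_word L) (a, s)) as [m t]. cbn [fst] in IH.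
  rewrite IH by (intros c Hc; apply HL; right; exact Hc).
  destruct (Nat.eq_dec a b) as [<-|].
  - rewrite act_gen_mid by lia. reflexivity.
  - assert (a < b) by (specialize (HL b (or_introl eq_refl)); lia).
    rewrite act_gen_lt by assumption. reflexivity.
Qed.

Lemma act_pos_head r a L : 1 <= r -> StronglySorted le (a :: L) ->
  exists s, act r (pos_word (a :: L)) (a, ones) = (a, scons 0 s).
Proof.
  intros Hr HL. apply StronglySorted_inv in HL as [_ Ha]. rewrite Forall_forall in Ha.
  rewrite act_pos_word_cons.
  pose proof (act_pos_fst r a L ones Hr Ha) as Hfst.
  destruct (act r (pos_word L) (a, ones)) as [m s]. cbn [fst] in Hfst. subst m.
  exists s. rewrite act_gen_mid by lia. rewrite Nat.sub_diag. reflexivity.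
Qed.

(* The least letter a of a sorted positive word moves the ray of ones from root a,
   which every larger letter fixes. *)
Lemma sorted_act_head_le r a P N : 2 <= r ->
  StronglySorted le (a :: P) -> StronglySorted le N ->
  (forall x, valid r x -> act r (pos_word (a :: P)) x = act r (pos_word N) x) ->
  exists b N', N = b :: N' /\ b <= a.
Proof.
  intros Hr HP HN H.
  assert (Hmoved : ~ forall c, In c N -> a < c).
  { intro HNa. destruct (act_pos_head r a P ltac:(lia) HP) as [s Hs].
    specialize (H (a, ones) (fun _ => ltac:(cbv; lia))).
    rewrite Hs, act_pos_fixed in H by exact HNa. injection H as H.
    apply (f_equal (fun t => t 0)) in H. discriminate H. }
  destruct N as [|b N']; [exfalso; apply Hmoved; intros c []|].
  exists b, N'. split; [reflexivity|].
  apply StronglySorted_inv in HN as [_ Hb]. rewrite Forall_forall in Hb.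
  destruct (Nat.le_gt_cases b a) as [|Hab]; [assumption|]. exfalso. apply Hmoved.
  intros c [<-|Hc]; [assumption|]. specialize (Hb c Hc). lia.
Qed.

Lemma sorted_act_inj r P N : 2 <= r -> StronglySorted le P -> StronglySorted le N ->
  (forall x, valid r x -> act r (pos_word P) x = act r (pos_word N) x) -> P = N.
Proof.
  intros Hr HP. revert N. induction HP as [|a P HP IH Ha]; intros N HN H.
  - destruct N as [|b N]; [reflexivity|].
    destruct (sorted_act_head_le r b N [] Hr HN (SSorted_nil le)) as (? & ? & [=] & _).
    intros x Hx. symmetry. apply H, Hx.
  - destruct (sorted_act_head_le r a P N Hr (SSorted_cons a HP Ha) HN H)
      as (b & N' & -> & Hba).
    destruct (sorted_act_head_le r b N' (a :: P) Hr HN (SSorted_cons a HP Ha))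
      as (? & ? & [= <- <-] & Hab); [intros x Hx; symmetry; apply H, Hx|].
    assert (a = b) as <- by lia. f_equal.
    apply IH; [apply (StronglySorted_inv HN)|]. intros x Hx.
    assert (Hr1 : 1 <= r) by lia.
    rewrite <- (act_gen_inv_act_gen r Hr1 a (act r (pos_word P) x)), <- act_pos_word_cons,
      H, act_pos_word_cons, act_gen_inv_act_gen by assumption.
    reflexivity.
Qed.

Lemma Feq_of_app_winv r u v : Feq r (u ++ winv v) [] -> Feq r u v.
Proof.
  intro H. transitivity ((u ++ winv v) ++ v).
  - rewrite <- app_assoc, Feq_winv_l, app_nil_r. reflexivity.
  - rewrite H. reflexivity.
Qed.

Theorem Feq_of_act_eq r u v : 2 <= r ->
  (forall x, valid r x -> act r u x = act r v x) -> Feq r u v.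
Proof.
  intros Hr H. assert (Hr1 : 1 <= r) by lia.
  destruct (Feq_normal_form r (u ++ winv v) Hr1) as (P & N & HF & _).
  assert (HPN : forall x, valid r x -> act r (pos_word P) x = act r (pos_word N) x).
  { intros x Hx. pose proof (act_valid r (pos_word N) x Hx) as Hy.
    rewrite <- (act_winv_l r Hr1 (pos_word N) x Hx) at 1.
    rewrite <- act_app, <- (act_Feq r Hr1 _ _ _ HF Hy), act_app, H by (apply act_valid, Hy).
    apply (act_winv_r r Hr1), Hy. }
  assert (Hsort : shift_sort r P = shift_sort r N).
  { apply (sorted_act_inj r); auto using shift_sort_sorted. intros x Hx.
    rewrite <- !(act_Feq r Hr1 _ _ x (Feq_shift_sort r _) Hx). apply HPN, Hx. }
  apply Feq_of_app_winv.
  rewrite HF, (Feq_shift_sort r P), (Feq_shift_sort r N), Hsort. apply Feq_winv_r.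
Qed.

(** * Word length *)

Lemma Feq_conj_shift r L : 1 <= r -> (forall c, In c L -> 1 <= c) ->
  Feq r ([(0, true)] ++ pos_word L ++ [(0, false)]) (pos_word (map (fun c => c + (r - 1)) L)).
Proof.
  intro Hr. induction L as [|c L IH]; intro HL.
  - apply (Feq_cancel_pair r (0, true)).
  - set (w := pos_word L ++ [(0, false)]).
    transitivity ([(0, true); (c, false); (0, false)] ++ [(0, true)] ++ w).
    { symmetry. exact (Feq_cancel r [(0, true); (c, false)] w (0, false)). }
    unfold w.
    rewrite IH, Feq_relation by (intros; apply HL; auto with datatypes).
    replace (c + r - 1) with (c + (r - 1)) by lia. reflexivity.
Qed.

Lemma in_le_list_max a L : In a L -> a <= list_max L.
Proof.
  pose proof (proj1 (list_max_le L (list_max L)) (le_n _)) as H.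
  rewrite Forall_forall in H. apply H.
Qed.

Lemma list_max_map_sub k Q : list_max (map (fun c => c - k) Q) = list_max Q - k.
Proof.
  induction Q as [|a Q IH]; [reflexivity|].
  change (Nat.max (a - k) (list_max (map (fun c => c - k) Q)) = Nat.max a (list_max Q) - k).
  rewrite IH. lia.
Qed.

Lemma sorted_map_sub k Q : StronglySorted le Q -> StronglySorted le (map (fun c => c - k) Q).
Proof.
  induction 1 as [|a Q _ IH Ha]; constructor; [exact IH|].
  rewrite Forall_forall in *. intros b (c & <- & Hc)%in_map_iff. specialize (Ha c Hc). lia.
Qed.

(* A letter below r is a generator; when all letters are at least r, conjugation by
   x_0 lowers each of them by r - 1. *)
Lemma sorted_pos_word_gen_word r Q : 2 <= r -> StronglySorted le Q ->
  exists u, gen_word r u /\ Feq r u (pos_word Q) /\ length u <= length Q + 2 * list_max Q.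
Proof.
  intro Hr. remember (length Q + list_max Q) as n eqn:En.
  revert Q En. induction n as [n IH] using lt_wf_ind. intros Q En HQ.
  destruct Q as [|b Q'].
  - exists []. split; [intros l []|split; reflexivity].
  - pose proof (in_le_list_max b (b :: Q') (or_introl eq_refl)) as Hb.
    destruct (Nat.ltb_spec b r).
    + apply StronglySorted_inv in HQ as [HQ' _].
      assert (list_max Q' <= list_max (b :: Q')).
      { apply list_max_le, Forall_forall. intros c Hc. apply in_le_list_max. right. exact Hc. }
      destruct (IH (length Q' + list_max Q') ltac:(cbn [length] in En; lia) Q' eq_refl HQ')
        as (u & Hu & HF & Hl).
      exists ((b, false) :: u). split; [|split].
      * intros l [<-|Hl']; [assumption | apply Hu, Hl'].
      * rewrite HF. reflexivity.
      * cbn [length] in *. lia.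
    + assert (Hge : forall c, In c (b :: Q') -> r <= c).
      { apply StronglySorted_inv in HQ as [_ Ha]. rewrite Forall_forall in Ha.
        intros c [<-|Hc]; [|specialize (Ha c Hc)]; lia. }
      set (Q2 := map (fun c => c - (r - 1)) (b :: Q')).
      destruct (IH (length Q2 + list_max Q2)) with (Q := Q2) as (u & Hu & HF & Hl).
      { unfold Q2. rewrite length_map, list_max_map_sub. lia. }
      { reflexivity. }
      { apply sorted_map_sub, HQ. }
      exists ([(0, true)] ++ u ++ [(0, false)]). split; [|split].
      * apply gen_word_app; [intros l [<-|[]]; cbn; lia|].
        apply gen_word_app; [exact Hu | intros l [<-|[]]; cbn; lia].
      * rewrite HF. unfold Q2. rewrite Feq_conj_shift, map_map.
        -- rewrite map_ext_in with (g := fun c => c) by (intros c Hc; specialize (Hge c Hc); lia).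
           rewrite map_id. reflexivity.
        -- lia.
        -- intros c (c' & <- & Hc')%in_map_iff. specialize (Hge c' Hc'). lia.
      * unfold Q2 in Hl. rewrite length_map, list_max_map_sub in Hl.
        rewrite !length_app. cbn [length] in *. lia.
Qed.

Lemma pos_word_gen_word r P : 2 <= r ->
  exists u, gen_word r u /\ Feq r u (pos_word P) /\ length u <= 3 * tau r P.
Proof.
  intro Hr. set (Q := shift_sort r P).
  destruct (sorted_pos_word_gen_word r Q Hr) as (u & Hu & HF & Hl);
    [apply shift_sort_sorted; lia|].
  exists u. split; [exact Hu|split].
  - rewrite HF. symmetry. apply Feq_shift_sort.
  - pose proof (tau_ge_list_max r Q). pose proof (tau_ge_length r Q).
    unfold Q in *. rewrite tau_shift_sort in * by lia. rewrite length_shift_sort in *. nia.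
Qed.

Lemma normal_form_gen_word r P N : 2 <= r -> exists u, gen_word r u /\
  Feq r u (pos_word P ++ winv (pos_word N)) /\ length u <= 3 * tau r P + 3 * tau r N.
Proof.
  intro Hr.
  destruct (pos_word_gen_word r P Hr) as (u & Hu & HFu & Hlu).
  destruct (pos_word_gen_word r N Hr) as (v & Hv & HFv & Hlv).
  exists (u ++ winv v). split; [|split].
  - apply gen_word_app, gen_word_winv; assumption.
  - rewrite HFu, HFv. reflexivity.
  - rewrite length_app, length_winv. lia.
Qed.

Lemma wordlen_spec r g : 2 <= r -> is_wordlen r g (wordlen r g).
Proof.
  intro Hr. unfold wordlen. apply epsilon_spec.
  destruct (Feq_normal_form r g ltac:(lia)) as (P & N & HF & _).
  destruct (normal_form_gen_word r P N Hr) as (u & Hu & HFu & _).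
  destruct (dec_inh_nat_subset_has_unique_least_element
              (fun n => exists u, gen_word r u /\ Feq r u g /\ length u = n))
    as (n & [[v (Hv & HFv & Hlv)] Hmin] & _).
  - intro n. apply classic.
  - exists (length u), u. split; [exact Hu | split; [rewrite HFu, HF|]]; reflexivity.
  - exists n. split; [exists v; auto|]. intros w Hw HFw. apply Hmin. exists w. auto.
Qed.

Lemma wordlen_le r g u : 2 <= r -> gen_word r u -> Feq r u g -> wordlen r g <= length u.
Proof. intros Hr Hu HF. apply (proj2 (wordlen_spec r g Hr)); assumption. Qed.

Lemma wordlen_attained r g : 2 <= r ->
  exists u, gen_word r u /\ Feq r u g /\ length u = wordlen r g.
Proof. intro Hr. apply (proj1 (wordlen_spec r g Hr)). Qed.

(** * The embedding j1 *)

Lemma j1_app d u v : j1 d (u ++ v) = j1 d u ++ j1 d v.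
Proof. apply map_app. Qed.

Lemma j1_winv d w : j1 d (winv w) = winv (j1 d w).
Proof. unfold j1, winv. rewrite map_rev, !map_map. reflexivity. Qed.

Lemma length_j1 d w : length (j1 d w) = length w.
Proof. apply length_map. Qed.

Definition dilate_stream (d : nat) (s : stream) : stream := fun n => d * s n.
Definition dilate (d : nat) (x : point) : point := (d * fst x, dilate_stream d (snd x)).

Definition divisible (d : nat) (x : point) : Prop :=
  fst x mod d = 0 /\ forall n, snd x n mod d = 0.

Lemma dilate_inj d x y : 0 < d -> dilate d x = dilate d y -> x = y.
Proof.
  intros Hd. destruct x as [m s], y as [m' s']. unfold dilate, dilate_stream. cbn.
  intros [= Hm Hs]. f_equal; [nia|]. apply functional_extensionality. intro n.
  apply (f_equal (fun t => t n)) in Hs. nia.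
Qed.

Lemma divisible_iff d x : 0 < d -> divisible d x <-> exists y, x = dilate d y.
Proof.
  intro Hd. destruct x as [m s]. unfold divisible, dilate, dilate_stream. cbn. split.
  - intros [Hm Hs]. exists (m / d, fun n => s n / d). cbn. f_equal.
    + rewrite (Nat.div_mod_eq m d) at 1. rewrite Hm. lia.
    + apply functional_extensionality. intro n.
      rewrite (Nat.div_mod_eq (s n) d) at 1. rewrite Hs. lia.
  - intros [y [= -> ->]]. split; [|intro n]; rewrite Nat.mul_comm; apply Nat.Div0.mod_mul.
Qed.

Fixpoint rank (m : nat -> bool) (n : nat) : nat :=
  match n with 0 => 0 | S n' => rank m n' + (if m n' then 1 else 0) end.

Lemma rank_mono m i j : i <= j -> rank m i <= rank m j.
Proof. induction 1; cbn; lia. Qed.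

Lemma rank_le m n : rank m n <= n.
Proof. induction n; cbn; [|destruct (m n)]; lia. Qed.

Lemma rank_lt m i j : m i = true -> i < j -> rank m i < rank m j.
Proof.
  intros Hi Hij. pose proof (rank_mono m (S i) j Hij) as H. cbn in H. rewrite Hi in H. lia.
Qed.

Lemma rank_ext m m' n : (forall i, m i = m' i) -> rank m n = rank m' n.
Proof. intro H. induction n; cbn; [|rewrite IHn, H]; reflexivity. Qed.

Lemma rank_surjective m : (forall n, exists i, n <= i /\ m i = true) ->
  forall j, exists i, m i = true /\ rank m i = j.
Proof.
  intros Hinf j.
  assert (Hhit : forall n k, k < rank m n -> exists i, m i = true /\ rank m i = k).
  { induction n as [|n IH]; intros k Hk; cbn in Hk; [lia|].
    destruct (Nat.lt_ge_cases k (rank m n)); [apply IH; assumption|].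
    exists n. destruct (m n); [split; [reflexivity | lia] | lia]. }
  assert (Hunb : forall k, exists n, k <= rank m n).
  { induction k as [|k [n Hn]]; [exists 0; lia|].
    destruct (Hinf n) as [i [Hi Hmi]]. exists (S i).
    pose proof (rank_lt m i (S i) Hmi (Nat.lt_succ_diag_r i)). pose proof (rank_mono m n i Hi).
    lia. }
  destruct (Hunb (S j)) as [n Hn]. apply (Hhit n). lia.
Qed.

Definition multiples (d : nat) : nat -> bool := fun i => i mod d =? 0.

Lemma rank_multiples_block d k c : 0 < d -> 1 <= c <= d ->
  rank (multiples d) (d * k + c) = rank (multiples d) (d * k) + 1.
Proof.
  intros Hd Hc. induction c as [|c IH]; [lia|]. rewrite Nat.add_succ_r. cbn [rank].
  replace (multiples d (d * k + c)) with (c =? 0) by (unfold multiples;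
    rewrite Nat.add_comm, Nat.mul_comm, Nat.Div0.mod_add, Nat.mod_small by lia; reflexivity).
  destruct c as [|c]; [rewrite Nat.add_0_r; reflexivity|]. rewrite IH by lia. cbn [Nat.eqb]. lia.
Qed.

Lemma rank_multiples_mul d k : 0 < d -> rank (multiples d) (d * k) = k.
Proof.
  intro Hd. induction k as [|k IH]; [rewrite Nat.mul_0_r; reflexivity|].
  rewrite Nat.mul_succ_r, rank_multiples_block, IH by lia. lia.
Qed.

Lemma act_pos_word_snoc r L a x :
  act r (pos_word (L ++ [a])) x = act r (pos_word L) (act_gen r a x).
Proof. rewrite pos_word_app, act_app. reflexivity. Qed.

Lemma fst_act_pos_word_le r L x : fst (act r (pos_word L) x) <= fst x.
Proof.
  induction L as [|a L IH]; [reflexivity|]. rewrite act_pos_word_cons.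
  pose proof (fst_act_gen_le r a (act r (pos_word L) x)). lia.
Qed.

Section Embedding.

Variables p q d : nat.
Hypothesis p_ge2 : 2 <= p.
Hypothesis q_ge2 : 2 <= q.
Hypothesis d_pos : 0 < d.
Hypothesis q_pred : q - 1 = d * (p - 1).

Lemma Feq_j1 u v : Feq p u v -> Feq q (j1 d u) (j1 d v).
Proof.
  induction 1 as [|u v _ IH|u v w _ IH1 _ IH2|u v [a b]|u v i j Hij].
  - reflexivity.
  - symmetry. exact IH.
  - rewrite IH1. exact IH2.
  - rewrite !j1_app. exact (Feq_cancel q (j1 d u) (j1 d v) (d * a, b)).
  - rewrite !j1_app. cbn.
    replace (d * (j + p - 1)) with (d * j + q - 1) by nia.
    apply (Feq_rel q (j1 d u) (j1 d v) (d * i) (d * j)). nia.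
Qed.

Lemma gen_word_j1 u : gen_word p u -> gen_word q (j1 d u).
Proof.
  intros Hu l ([a b] & <- & Hl)%in_map_iff. specialize (Hu _ Hl). cbn in *. nia.
Qed.

Lemma wordlen_j1_le g : wordlen q (j1 d g) <= wordlen p g.
Proof.
  destruct (wordlen_attained p g p_ge2) as (u & Hu & HF & <-).
  rewrite <- (length_j1 d u). apply wordlen_le; [exact q_ge2 | apply gen_word_j1, Hu |].
  apply Feq_j1, HF.
Qed.

Lemma act_gen_dilate a x : act_gen q (d * a) (dilate d x) = dilate d (act_gen p a x).
Proof.
  destruct x as [m s]. unfold dilate. cbn [fst snd].
  destruct (Nat.ltb_spec m a); [|destruct (Nat.ltb_spec m (a + p))].
  - rewrite !act_gen_lt by nia. reflexivity.
  - rewrite !act_gen_mid by nia. cbn [fst snd]. f_equal.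
    apply functional_extensionality. intros [|n]; unfold dilate_stream; cbn; nia.
  - rewrite !act_gen_ge by nia. cbn [fst snd]. f_equal. nia.
Qed.

Lemma act_gen_inv_dilate a x :
  act_gen_inv q (d * a) (dilate d x) = dilate d (act_gen_inv p a x).
Proof.
  destruct x as [m s]. unfold act_gen_inv, dilate, dilate_stream. cbn [fst snd].
  destruct (Nat.ltb_spec m a); [|destruct (Nat.eqb_spec m a) as [<-|]].
  - destruct (Nat.ltb_spec (d * m) (d * a)); [reflexivity | nia].
  - destruct (Nat.ltb_spec (d * m) (d * m)); [nia|].
    rewrite Nat.eqb_refl. cbn. f_equal. nia.
  - destruct (Nat.ltb_spec (d * m) (d * a)); [nia|].
    destruct (Nat.eqb_spec (d * m) (d * a)); [nia|]. cbn. f_equal. nia.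
Qed.

Lemma act_j1_dilate w x : act q (j1 d w) (dilate d x) = dilate d (act p w x).
Proof.
  induction w as [|[a []] w IH]; cbn [act j1 map act_letter fst snd]; [reflexivity| |];
    fold (j1 d w); rewrite IH.
  - apply act_gen_inv_dilate.
  - apply act_gen_dilate.
Qed.

Lemma valid_dilate_stream i j s : valid p (j, s) -> valid q (i, dilate_stream d s).
Proof. intros Hs n. specialize (Hs n). unfold dilate_stream. cbn in *. nia. Qed.

Lemma divisible_act_j1 g z : valid q z ->
  divisible d (act q (j1 d g) z) <-> divisible d z.
Proof.
  intro Hz. rewrite !divisible_iff by exact d_pos. split; intros [y Hy].
  - exists (act p (winv g) y).
    rewrite <- act_j1_dilate, <- Hy, j1_winv, act_winv_l by (assumption || lia).
    reflexivity.
  - exists (act p g y). rewrite Hy. apply act_j1_dilate.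
Qed.

(* [pull P] describes [pos_word P] on the dilated copy of the p-forest inside the
   q-forest.  Its first component marks the roots whose rays with digits divisible
   by d are sent into the copy ([pull_marks_preimage]); its second component is the
   positive F(p)-word induced on them, marked roots being renumbered by [rank]
   ([pull_intertwines]).  Letters are consumed from the right, in the order in which
   they act.  A letter x_a contributes x_(rank m a) exactly when root a is marked,
   because the marked children it creates sit at the p offsets 0, d, ..., q - 1. *)
Definition mark_after (m : nat -> bool) (a : nat) : nat -> bool :=
  fun i => if i <? a then m i
           else if i <? a + q then m a && ((i - a) mod d =? 0)
           else m (i - (q - 1)).

Definition pull_step (st : (nat -> bool) * list nat) (a : nat)
  : (nat -> bool) * list nat :=
  (mark_after (fst st) a, if fst st a then snd st ++ [rank (fst st) a] else snd st).

Definition pull (P : list nat) : (nat -> bool) * list nat :=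
  fold_left pull_step P (multiples d, []).

Lemma pull_snoc P a : pull (P ++ [a]) = pull_step (pull P) a.
Proof. apply fold_left_app. Qed.

Lemma rank_multiples_q : rank (multiples d) q = p.
Proof.
  replace q with (d * (p - 1) + 1) by lia.
  rewrite rank_multiples_block, rank_multiples_mul by lia. lia.
Qed.

Lemma rank_mark_after_le m a i : i <= a -> rank (mark_after m a) i = rank m i.
Proof.
  induction i as [|i IH]; intro Hi; [reflexivity|]. cbn [rank]. rewrite IH by lia.
  unfold mark_after. destruct (Nat.ltb_spec i a); [reflexivity | lia].
Qed.

Lemma rank_mark_after_mid m a c : c <= q ->
  rank (mark_after m a) (a + c) = rank m a + (if m a then rank (multiples d) c else 0).
Proof.
  induction c as [|c IH]; intro Hc.
  - rewrite Nat.add_0_r, rank_mark_after_le by lia. destruct (m a); cbn; lia.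
  - rewrite Nat.add_succ_r. cbn [rank]. rewrite IH by lia. unfold mark_after, multiples.
    destruct (Nat.ltb_spec (a + c) a); [lia|]. destruct (Nat.ltb_spec (a + c) (a + q)); [|lia].
    replace (a + c - a) with c by lia. destruct (m a); cbn; lia.
Qed.

Lemma rank_mark_after_ge m a i : a + q <= i ->
  rank (mark_after m a) i = rank m (i - (q - 1)) + (if m a then p - 1 else 0).
Proof.
  intro Hi. replace i with (a + q + (i - a - q)) by lia. generalize (i - a - q) as e.
  induction e as [|e IH].
  - rewrite Nat.add_0_r, rank_mark_after_mid, rank_multiples_q by lia.
    replace (a + q - (q - 1)) with (S a) by lia. cbn [rank]. destruct (m a); lia.
  - rewrite Nat.add_succ_r. cbn [rank]. rewrite IH. unfold mark_after.
    destruct (Nat.ltb_spec (a + q + e) a); [lia|].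
    destruct (Nat.ltb_spec (a + q + e) (a + q)); [lia|].
    replace (S (a + q + e) - (q - 1)) with (S (a + q + e - (q - 1))) by lia.
    cbn [rank]. lia.
Qed.

Definition marks_preimage (m : nat -> bool) (f : point -> point) : Prop :=
  forall i t, divisible d (f (i, t)) <-> m i = true /\ forall n, t n mod d = 0.

Definition intertwines (m : nat -> bool) (f g : point -> point) : Prop :=
  forall i s, m i = true -> f (i, dilate_stream d s) = dilate d (g (rank m i, s)).

Lemma marks_preimage_step m f a : marks_preimage m f ->
  marks_preimage (mark_after m a) (fun x => f (act_gen q a x)).
Proof.
  unfold marks_preimage. intros Hf i t. unfold mark_after.
  destruct (Nat.ltb_spec i a); [|destruct (Nat.ltb_spec i (a + q))].
  - rewrite act_gen_lt by assumption. apply Hf.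
  - rewrite act_gen_mid, Hf, andb_true_iff, Nat.eqb_eq by lia. split.
    + intros [Ha Ht]. split; [split; [exact Ha | exact (Ht 0)]|]. intro n. exact (Ht (S n)).
    + intros [[Ha Hia] Ht]. split; [exact Ha|]. intros [|n]; [exact Hia | apply Ht].
  - rewrite act_gen_ge by assumption. apply Hf.
Qed.

Lemma intertwines_step m f g a : intertwines m f g ->
  intertwines (mark_after m a) (fun x => f (act_gen q a x))
    (if m a then fun y => g (act_gen p (rank m a) y) else g).
Proof.
  intros Hf i s Hi. unfold mark_after in Hi.
  destruct (Nat.ltb_spec i a); [|destruct (Nat.ltb_spec i (a + q))].
  - rewrite act_gen_lt, Hf, rank_mark_after_le by (assumption || lia).
    destruct (m a) eqn:Ha; [|reflexivity].
    rewrite act_gen_lt; [reflexivity|]. apply rank_lt; assumption.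
  - apply andb_true_iff in Hi as [Ha Hia]. apply Nat.eqb_eq in Hia.
    pose proof (proj2 (Nat.Div0.div_exact (i - a) d) Hia) as Hk.
    set (k := (i - a) / d) in Hk.
    assert (k < p) by nia.
    replace (act_gen q a (i, dilate_stream d s))
      with (a, dilate_stream d (scons k s)).
    2: { rewrite act_gen_mid by lia. f_equal. apply functional_extensionality.
         intros [|n]; unfold dilate_stream; cbn; lia. }
    rewrite Hf, Ha by exact Ha.
    replace (rank (mark_after m a) i) with (rank m a + k).
    2: { replace i with (a + d * k) by lia.
         rewrite rank_mark_after_mid, Ha, rank_multiples_mul by lia. reflexivity. }
    rewrite act_gen_mid by lia. replace (rank m a + k - rank m a) with k by lia. reflexivity.
  - rewrite act_gen_ge, Hf, rank_mark_after_ge by (assumption || lia).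
    destruct (m a) eqn:Ha; [|rewrite Nat.add_0_r; reflexivity].
    assert (rank m (S a) <= rank m (i - (q - 1))) by (apply rank_mono; lia).
    cbn [rank] in *. rewrite Ha in *.
    rewrite act_gen_ge by lia. do 3 f_equal. lia.
Qed.

Lemma pull_marks_preimage P : marks_preimage (fst (pull P)) (act q (pos_word P)).
Proof.
  induction P as [|a P IH] using rev_ind.
  - intros i t. cbn. unfold divisible, multiples. rewrite Nat.eqb_eq. reflexivity.
  - intros i t. rewrite pull_snoc, act_pos_word_snoc. apply (marks_preimage_step _ _ _ IH).
Qed.

Lemma pull_intertwines P :
  intertwines (fst (pull P)) (act q (pos_word P)) (act p (pos_word (snd (pull P)))).
Proof.
  induction P as [|a P IH] using rev_ind.
  - intros i s Hi. unfold multiples in Hi. cbn in Hi |- *. apply Nat.eqb_eq in Hi.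
    apply Nat.Div0.div_exact in Hi. unfold dilate. cbn [fst snd].
    rewrite Hi at 2. rewrite rank_multiples_mul by exact d_pos. rewrite <- Hi. reflexivity.
  - intros i s Hi. rewrite pull_snoc in Hi |- *. rewrite act_pos_word_snoc.
    destruct (pull P) as [m Q]. cbn [pull_step fst snd] in *.
    pose proof (intertwines_step m _ _ a IH i s Hi) as E. rewrite E.
    destruct (m a); [rewrite act_pos_word_snoc|]; reflexivity.
Qed.

Lemma pull_tau P : tau p (snd (pull P)) <= tau q P.
Proof.
  induction P as [|a P IH] using rev_ind; [cbn; lia|].
  rewrite pull_snoc, tau_snoc. destruct (pull P) as [m Q]. cbn [pull_step fst snd] in *.
  destruct (m a); [rewrite tau_snoc; pose proof (rank_le m a)|]; nia.
Qed.

Lemma pull_marks_unbounded N : forall n, exists i, n <= i /\ fst (pull N) i = true.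
Proof.
  intro n. set (z := (d * n, fun _ : nat => 0)).
  assert (Hz : valid q z) by (intro k; cbn; lia).
  pose proof (act_winv_r q ltac:(lia) (pos_word N) z Hz) as Ez.
  destruct (act q (winv (pos_word N)) z) as [i t].
  pose proof (fst_act_pos_word_le q N (i, t)) as Hi. rewrite Ez in Hi. cbn in Hi.
  assert (Hdiv : divisible d (act q (pos_word N) (i, t))).
  { rewrite Ez. split; cbn.
    - rewrite Nat.mul_comm. apply Nat.Div0.mod_mul.
    - intros _. apply Nat.Div0.mod_0_l. }
  apply pull_marks_preimage in Hdiv as [Hmark _].
  exists i. split; [nia | exact Hmark].
Qed.

Section PullbackOfNormalForm.

Variables (g : word) (P' N' : list nat).
Hypothesis j1_normal : Feq q (j1 d g) (pos_word P' ++ winv (pos_word N')).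

Lemma act_j1_normal z : valid q z ->
  act q (j1 d g) (act q (pos_word N') z) = act q (pos_word P') z.
Proof.
  intro Hz. assert (Hq1 : 1 <= q) by lia.
  rewrite (act_Feq q Hq1 _ _ _ j1_normal) by (apply act_valid, Hz).
  rewrite act_app, act_winv_l by assumption. reflexivity.
Qed.

Lemma pull_marks_eq i : fst (pull P') i = fst (pull N') i.
Proof.
  set (z := (i, fun _ : nat => 0)). assert (Hz : valid q z) by (intro k; cbn; lia).
  assert (Hzero : forall n, (fun _ : nat => 0) n mod d = 0) by (intros _; apply Nat.Div0.mod_0_l).
  apply eq_true_iff_eq.
  pose proof (pull_marks_preimage P' i (fun _ => 0)) as EP.
  pose proof (pull_marks_preimage N' i (fun _ => 0)) as EN.
  pose proof (divisible_act_j1 g _ (act_valid q (pos_word N') z Hz)) as EJ.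
  fold z in EP, EN. rewrite act_j1_normal in EJ by exact Hz.
  tauto.
Qed.

Lemma act_pullback x : valid p x ->
  act p g x = act p (pos_word (snd (pull P')) ++ winv (pos_word (snd (pull N')))) x.
Proof.
  intro Hx. set (v := pos_word (snd (pull N'))).
  pose proof (act_valid p (winv v) x Hx) as Hy.
  pose proof (act_winv_r p ltac:(lia) v x Hx) as Ex.
  rewrite act_app. destruct (act p (winv v) x) as [j s]. unfold v in Ex.
  destruct (rank_surjective _ (pull_marks_unbounded N') j) as (i & Hi & <-).
  apply (dilate_inj d _ _ d_pos).
  rewrite <- act_j1_dilate, <- Ex, <- (pull_intertwines N' i s Hi), act_j1_normal, pull_intertwines.
  - rewrite (rank_ext _ _ i pull_marks_eq). reflexivity.
  - rewrite pull_marks_eq. exact Hi.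
  - exact (valid_dilate_stream i _ s Hy).
Qed.

End PullbackOfNormalForm.

Lemma wordlen_le_j1 g : wordlen p g <= 12 * q * wordlen q (j1 d g).
Proof.
  destruct (wordlen_attained q (j1 d g) q_ge2) as (u' & Hu' & HFu' & <-).
  destruct (Feq_normal_form q u' ltac:(lia)) as (P' & N' & HF' & Htau).
  destruct (Htau Hu') as [HP' HN'].
  assert (Hj1 : Feq q (j1 d g) (pos_word P' ++ winv (pos_word N'))) by (rewrite <- HFu'; exact HF').
  destruct (normal_form_gen_word p (snd (pull P')) (snd (pull N')) p_ge2)
    as (u & Hu & HFu & Hlen).
  assert (Hg : Feq p u g).
  { rewrite HFu. symmetry. apply Feq_of_act_eq; [exact p_ge2 | apply act_pullback, Hj1]. }
  pose proof (wordlen_le p g u p_ge2 Hu Hg). pose proof (pull_tau P'). pose proof (pull_tau N').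
  nia.
Qed.

End Embedding.

Open Scope R_scope.

Theorem proposition8 (p q d : nat) :
  (2 <= p)%nat -> (2 <= q)%nat -> (0 < d)%nat -> (q - 1 = d * (p - 1))%nat ->
  exists C K : R, 1 <= C /\ 0 <= K /\
    forall a b : word,
      / C * INR (Fdist p a b) - K <= INR (Fdist q (j1 d a) (j1 d b)) /\
      INR (Fdist q (j1 d a) (j1 d b)) <= C * INR (Fdist p a b) + K.
Proof.
  intros Hp Hq Hd Hpq. exists (INR (12 * q)), 0.
  assert (HC : 1 <= INR (12 * q)) by (apply (le_INR 1); lia).
  split; [exact HC | split; [lra|]]. intros a b.
  unfold Fdist. rewrite <- j1_winv, <- j1_app.
  pose proof (le_INR _ _ (wordlen_j1_le p q d Hp Hq Hd Hpq (winv a ++ b))) as Hup.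
  pose proof (le_INR _ _ (wordlen_le_j1 p q d Hp Hq Hd Hpq (winv a ++ b))) as Hlow.
  pose proof (pos_INR (wordlen p (winv a ++ b))).
  rewrite mult_INR in Hlow. split.
  - apply (Rmult_le_reg_l (INR (12 * q))); [lra|].
    rewrite Rmult_minus_distr_l, <- Rmult_assoc, Rinv_r by lra. lra.
  - nra.
Qed.
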